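(* Let $K$ be a field, $v:K^*\to\mathbb Z$ a discrete non-archimedean valuation and $T_v$ the Bruhat–Tits tree of $(K,v)$, with its natural action of $GL(2,K)$. Let $\Gamma$ be a finitely generated group, $\chi\in E^1(\Gamma,K)$, and let $\theta:\Gamma\to K$ be a 1-cocycle for $\chi$ whose class in $H^1(\Gamma,\chi)$ is nonzero. Define $\rho:\Gamma\to GL(2,K)$ by $\rho(g)=\begin{pmatrix}\chi(g)&\theta(g)\\0&1\end{pmatrix}$. If $v\circ\chi\in \mathrm{Hom}(\Gamma,\mathbb Z)$ is nonzero, then the action of $\Gamma$ on $T_v$ via $\rho$ is exceptional.
   Context: $E^1(\Gamma,K)$ is the set of characters $\chi:\Gamma\to K^*$ with $H^1(\Gamma,\chi)\ne 0$, where a 1-cocycle is $\theta:\Gamma\to K$ with $\theta(gh)=\theta(g)+\chi(g)\theta(h)$ and coboundaries are $g\mapsto\mu(\chi(g)-1)$. The Bruhat–Tits tree $T_v$ has as vertices homothety classes of free rank-2 $O_v$-submodules (lattices) of $K^2$ spanning $K^2$, where $O_v=\{v\ge0\}$, two vertices being adjacent when representatives $\Lambda\supset\Lambda'$ satisfy $\Lambda/\Lambda'\cong O_v/\mathfrak m_v$; its boundary is $P^1(\hat K_v)$. For a simplicial tree $T$, rays are isometric maps $r:[a,\infty)\to T$, two rays are equivalent if they eventually coincide up to reparametrization by translation, and $\partial T$ is the set of classes. The Busemann function of $r$ is $b_r(x)=\lim_{t\to\infty}(d(x,r(t))-t)$. If $\Gamma$ acts on $T$ fixing $\alpha\in\partial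 T$ represented by $r$, the Busemann cocycle is the homomorphism $\omega_\alpha(g)=b_r\circ g-b_r\in\mathbb Z$. The action is exceptional if $\Gamma$ fixes exactly one point of $\partial T$ and the associated Busemann cocycle is nontrivial. *)

From HB Require Import structures.
From mathcomp Require Import all_boot all_order all_algebra.
Set Implicit Arguments. Unset Strict Implicit. Unset Printing Implicit Defensive.
Import Order.TTheory GRing.Theory Num.Theory.
Local Open Scope ring_scope.

Section BT.
Variable K : fieldType.

(** Discrete (normalized) non-archimedean valuation v : K^* -> Z.
    The value of [v] at 0 is irrelevant. *)
Definition discrete_valuation (v : K -> int) : Prop :=
  [/\ (forall x y : K, x != 0 -> y != 0 -> v (x * y) = v x + v y),
      (forall x y : K, x != 0 -> y != 0 -> x + y != 0 ->
          Num.min (v x) (v y) <= v (x + y))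
    & (forall n : int, exists x : K, x != 0 /\ v x = n)].

Variable v : K -> int.

Definition inO (x : K) : Prop := x = 0 \/ 0 <= v x.
Definition inm (x : K) : Prop := x = 0 \/ 0 < v x.
Definition congm (x y : K) : Prop := inm (x - y).

Definition vset := 'cV[K]_2 -> Prop.

Definition lattice (L : vset) : Prop :=
  exists b1 b2 : 'cV[K]_2,
    [/\ (forall x, L x <-> exists a c, [/\ inO a, inO c & x = a *: b1 + c *: b2]),
        (forall a c, inO a -> inO c -> a *: b1 + c *: b2 = 0 -> a = 0 /\ c = 0)
      & (forall y : 'cV[K]_2, exists k1 k2 : K, y = k1 *: b1 + k2 *: b2)].

(** Homothety of lattices (vertices of T_v are homothety classes). *)
Definition homot (L1 L2 : vset) : Prop :=
  exists c : K, c != 0 /\ forall x, L2 x <-> exists y, L1 y /\ x = c *: y.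

(** [L' ⊆ L] and [L / L' ≅ O_v / m_v] as O_v-modules: there is an O_v-linear
    surjection L -> O_v/m_v (given by an O_v-valued lift [phi]) with kernel L'. *)
Definition quot_residue (L L' : vset) : Prop :=
  (forall x, L' x -> L x) /\
  exists phi : 'cV[K]_2 -> K,
    [/\ (forall x, L x -> inO (phi x)),
        (forall x y a b, L x -> L y -> inO a -> inO b ->
            congm (phi (a *: x + b *: y)) (a * phi x + b * phi y)),
        (forall c, inO c -> exists x, L x /\ congm (phi x) c)
      & (forall x, L x -> (L' x <-> inm (phi x)))].

Definition adj (L1 L2 : vset) : Prop :=
  exists M1 M2, [/\ lattice M1, lattice M2, homot L1 M1, homot L2 M2
                  & quot_residue M1 M2 \/ quot_residue M2 M1].

Fixpoint tpath (n : nat) (x y : vset) : Prop :=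
  match n with
  | 0 => homot x y
  | n'.+1 => exists z, lattice z /\ adj x z /\ tpath n' z y
  end.

Definition dist (x y : vset) (n : nat) : Prop :=
  tpath n x y /\ forall m, (m < n)%N -> ~ tpath m x y.

Definition is_ray (r : nat -> vset) : Prop :=
  (forall t, lattice (r t)) /\
  forall s t, dist (r s) (r t) (maxn s t - minn s t).

Definition ray_equiv (r1 r2 : nat -> vset) : Prop :=
  exists k m : nat, forall n, homot (r1 (n + k)%N) (r2 (n + m)%N).

Definition act (g : 'M[K]_2) (L : vset) : vset :=
  fun x => exists y, L y /\ x = g *m y.

Definition act_ray (g : 'M[K]_2) (r : nat -> vset) : nat -> vset :=
  fun t => act g (r t).

Definition busemann (r : nat -> vset) (x : vset) (c : int) : Prop :=
  exists N : nat, forall t : nat, (N <= t)%N ->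
    exists n, dist x (r t) n /\ (n%:Z - t%:Z = c).

End BT.

Section Grp.
Local Open Scope group_scope.
Variable G : groupType.

Definition finitely_generated : Prop :=
  exists S : seq G, forall g : G, exists w : seq G,
    all (fun s => (s \in S) || (s^-1 \in S)) w /\ g = \prod_(s <- w) s.
End Grp.

Section Coh.
Variables (G : groupType) (K : fieldType).

Definition is_character (chi : G -> K) : Prop :=
  (forall g, chi g != 0) /\ forall g h, chi (g * h)%g = chi g * chi h.

Definition cocycle (chi theta : G -> K) : Prop :=
  forall g h, theta (g * h)%g = theta g + chi g * theta h.

Definition coboundary (chi theta : G -> K) : Prop :=
  exists mu : K, forall g, theta g = mu * (chi g - 1).

Definition E1 (chi : G -> K) : Prop :=
  is_character chi /\ exists theta, cocycle chi theta /\ ~ coboundary chi theta.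

Definition rho (chi theta : G -> K) (g : G) : 'M[K]_2 :=
  \matrix_(i < 2, j < 2)
    if (i == 0 :> nat) then (if (j == 0 :> nat) then chi g else theta g)
    else (if (j == 0 :> nat) then 0 else 1).

Definition exceptional (v : K -> int) (r : G -> 'M[K]_2) : Prop :=
  exists ray : nat -> vset K,
    [/\ is_ray v ray,
        (forall g, ray_equiv (act_ray (r g) ray) ray),
        (forall ray', is_ray v ray' -> (forall g, ray_equiv (act_ray (r g) ray') ray') ->
            ray_equiv ray' ray)
      & exists g x c1 c2, [/\ lattice v x, busemann v ray (act (r g) x) c1,
                             busemann v ray x c2 & c1 <> c2]].
End Coh.

(* A vertex of T_v is the class of a lattice O (c, 0) + O (x, 1), that is, a ball of K, and
   [rho g] acts on it through the affine map y |-> chi g * y + theta g.  The balls of centre 0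
   form a ray [std_ray] towards the end fixed by the upper triangular matrices; [rho g] moves
   it by v (chi g), so its Busemann cocycle is v o chi, which is nonzero.  Along any ray the
   level v c changes by one at each step and a ray cannot descend and then ascend, so it
   either ascends forever, and is then equivalent to [std_ray], or eventually descends towards
   a boundary point.  If such a ray is invariant, that point is the fixed point
   x0 = theta g0 / (1 - chi g0) of the contraction [rho g0] (v (chi g0) > 0), hence it is fixed
   by every [rho g], i.e. theta g = - x0 * (chi g - 1) would be a coboundary. *)

From HB Require Import structures.
From mathcomp Require Import all_boot all_order all_algebra zify ring.
From Stdlib Require Import FunctionalExtensionality PropExtensionality Classical.
Import Order.TTheory GRing.Theory Num.Theory.
Local Open Scope ring_scope.
Set Implicit Arguments. Unset Strict Implicit. Unset Printing Implicit Defensive.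

Section Vectors.
Variable K : fieldType.

Definition vec (a b : K) : 'cV[K]_2 :=
  \matrix_(i < 2, j < 1) if (i == 0 :> nat) then a else b.

Lemma vec_eta (z : 'cV[K]_2) : z = vec (z 0 0) (z 1 0).
Proof.
apply/matrixP => i j; rewrite !mxE (ord1 j).
by case: i => [[|[|//]]] //= ?; congr (z _ _); apply: val_inj.
Qed.

Lemma vec_inj a b a' b' : vec a b = vec a' b' -> a = a' /\ b = b'.
Proof.
move=> e; have := congr1 (fun z : 'cV[K]_2 => z 0 0) e.
by have := congr1 (fun z : 'cV[K]_2 => z 1 0) e; rewrite /= !mxE.
Qed.

Lemma vec_snd a b : vec a b 1 0 = b.
Proof. by rewrite mxE. Qed.

Lemma vec0 : 0 = vec 0 0.
Proof. by apply/matrixP => i j; rewrite !mxE; case: ifP. Qed.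

Lemma vecZ c a b : c *: vec a b = vec (c * a) (c * b).
Proof. by apply/matrixP => i j; rewrite !mxE; case: ifP. Qed.

Lemma lin_vec a c p1 q1 p2 q2 :
  a *: vec p1 q1 + c *: vec p2 q2 = vec (a * p1 + c * p2) (a * q1 + c * q2).
Proof. by apply/matrixP => i j; rewrite !mxE; case: ifP. Qed.

Lemma rho_vec (G : groupType) (chi theta : G -> K) g a b :
  rho chi theta g *m vec a b = vec (chi g * a + theta g * b) b.
Proof.
apply/matrixP => i j; rewrite !mxE !big_ord_recr big_ord0 /= !mxE /=.
by case: i => [[|[|//]]] //= _; rewrite add0r ?mul0r ?mul1r ?add0r.
Qed.

Lemma vset_ext (A B : vset K) : (forall z, A z <-> B z) -> A = B.
Proof.
move=> h; apply: functional_extensionality => z.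
exact: propositional_extensionality.
Qed.

Definition dilate (c : K) (L : vset K) : vset K :=
  fun z => exists y, L y /\ z = c *: y.

Lemma dilate1 L : dilate 1 L = L.
Proof.
apply: vset_ext => z; split; first by move=> [y [hy ->]]; rewrite scale1r.
by move=> hz; exists z; rewrite scale1r.
Qed.

Lemma dilateM c d L : dilate c (dilate d L) = dilate (c * d) L.
Proof.
apply: vset_ext => z; split.
  by move=> [y [[w [hw ->]] ->]]; exists w; rewrite scalerA.
by move=> [w [hw ->]]; exists (d *: w); split; [exists w|rewrite scalerA].
Qed.

Lemma dilateVK c L : c != 0 -> dilate c (dilate c^-1 L) = L.
Proof. by move=> c0; rewrite dilateM mulfV // dilate1. Qed.

Lemma mem_dilate c L z : c != 0 -> dilate c L (c *: z) <-> L z.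
Proof.
move=> c0; split; last by move=> hz; exists z.
by move=> [y [hy /(scalerI c0) ->]].
Qed.

Lemma act_dilate g c L : act g (dilate c L) = dilate c (act g L).
Proof.
apply: vset_ext => z; split.
  by move=> [y [[w [hw ->]] ->]]; exists (g *m w); split; [exists w|rewrite scalemxAr].
by move=> [y [[w [hw ->]] ->]]; exists (c *: w); split; [exists w|rewrite scalemxAr].
Qed.

Lemma homotE (L1 L2 : vset K) : homot L1 L2 <-> exists c, c != 0 /\ L2 = dilate c L1.
Proof.
split; first by move=> [c [c0 h]]; exists c; split => //; apply: vset_ext.
by move=> [c [c0 ->]]; exists c.
Qed.

Lemma homot_refl (L : vset K) : homot L L.
Proof. by apply/homotE; exists 1; rewrite oner_neq0 dilate1. Qed.

Lemma homot_sym (L1 L2 : vset K) : homot L1 L2 -> homot L2 L1.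
Proof.
move/homotE=> [c [c0 ->]]; apply/homotE; exists c^-1.
by rewrite invr_neq0 // dilateM mulVf // dilate1.
Qed.

Lemma homot_trans (L1 L2 L3 : vset K) : homot L1 L2 -> homot L2 L3 -> homot L1 L3.
Proof.
move/homotE=> [c [c0 ->]] /homotE [d [d0 ->]]; apply/homotE; exists (d * c).
by rewrite mulf_neq0 // dilateM.
Qed.

Lemma homot_dilate c (L : vset K) : c != 0 -> homot L (dilate c L).
Proof. by move=> c0; apply/homotE; exists c. Qed.

Lemma homot_act g (L1 L2 : vset K) : homot L1 L2 -> homot (act g L1) (act g L2).
Proof. by move/homotE=> [c [c0 ->]]; apply/homotE; exists c; rewrite act_dilate. Qed.

End Vectors.
Arguments mem_dilate {K c L z}.

Section Valuation.
Variables (K : fieldType) (v : K -> int).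
Hypothesis hv : discrete_valuation v.

Lemma vM x y : x != 0 -> y != 0 -> v (x * y) = v x + v y.
Proof. by case: hv => h _ _; apply: h. Qed.

Lemma v1 : v 1 = 0.
Proof.
have h : v 1 = v 1 + v 1 by rewrite -{1}(mulr1 (1 : K)) vM // oner_neq0.
lia.
Qed.

Lemma vV x : x != 0 -> v x^-1 = - v x.
Proof. by move=> x0; have := vM x0 (invr_neq0 x0); rewrite mulfV // v1; lia. Qed.

Lemma vN x : v (- x) = v x.
Proof.
have n1 : (-1 : K) != 0 by rewrite oppr_eq0 oner_neq0.
have vn1 : v (-1) = 0 by have := vM n1 n1; rewrite mulrNN mulr1 v1; lia.
case: (eqVneq x 0) => [->|x0]; first by rewrite oppr0.
by rewrite -mulN1r vM // vn1 add0r.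
Qed.

Lemma vX x n : x != 0 -> v (x ^+ n) = v x * n%:Z.
Proof.
move=> x0; elim: n => [|n IH]; first by rewrite expr0 v1 mulr0.
by rewrite exprSr vM ?expf_neq0 // IH intS mulrDr mulr1 addrC.
Qed.

Definition vge (t : int) (x : K) := x = 0 \/ t <= v x.

Lemma vge0 t : vge t 0. Proof. by left. Qed.

Lemma vge_val x : vge (v x) x. Proof. by right. Qed.

Lemma vgeE t x : x != 0 -> vge t x -> t <= v x.
Proof. by move=> /eqP x0 []. Qed.

Lemma vge_le s t x : s <= t -> vge t x -> vge s x.
Proof. by move=> st [->|h]; [left|right; lia]. Qed.

Lemma vgeD t x y : vge t x -> vge t y -> vge t (x + y).
Proof.
case: (eqVneq x 0) => [-> //|x0]; first by rewrite add0r.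
case: (eqVneq y 0) => [-> //|y0]; first by rewrite addr0.
case: (eqVneq (x + y) 0) => [->|s0 /(vgeE x0) hx /(vgeE y0) hy]; first by left.
case: hv => _ /(_ x y x0 y0 s0) h _; right; apply: le_trans h.
by rewrite le_min hx hy.
Qed.

Lemma vgeN t x : vge t x -> vge t (- x).
Proof. by move=> [->|h]; [rewrite oppr0; left|right; rewrite vN]. Qed.

Lemma vgeB t x y : vge t x -> vge t y -> vge t (x - y).
Proof. by move=> hx /vgeN; apply: vgeD. Qed.

Lemma vgeM s t x y : vge s x -> vge t y -> vge (s + t) (x * y).
Proof.
case: (eqVneq x 0) => [->|x0]; first by rewrite mul0r; left.
case: (eqVneq y 0) => [->|y0]; first by rewrite mulr0; left.
by move=> /(vgeE x0) hx /(vgeE y0) hy; right; rewrite vM //; lia.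
Qed.

Lemma vge_mull_cancel t c x : c != 0 -> vge (t + v c) (c * x) -> vge t x.
Proof.
move=> c0; case: (eqVneq x 0) => [->|x0 h]; first by left.
by right; have := vgeE (mulf_neq0 c0 x0) h; rewrite vM //; lia.
Qed.

Lemma vge_div t c x : c != 0 -> vge t x -> vge (t - v c) (x / c).
Proof. by move=> c0 h; have := vgeM h (vge_val c^-1); rewrite vV. Qed.

Lemma vge_all_eq0 x : (forall t, vge t x) -> x = 0.
Proof.
move=> h; case: (eqVneq x 0) => // x0; have := vgeE x0 (h (v x + 1)); lia.
Qed.

Lemma v_subr1 c : 0 < v c -> v (c - 1) = 0 /\ c - 1 != 0.
Proof.
move=> vc; have c1 : c - 1 != 0.
  by rewrite subr_eq0; apply/eqP => e; move: vc; rewrite e v1.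
split => //; have h1 : vge 0 (c - 1) by apply: vgeB; right; rewrite ?v1; lia.
have h2 : vge (Num.min (v (c - 1)) (v c)) ((c - 1) - c).
  by apply: vgeB; right; rewrite ge_min lexx ?orbT.
rewrite addrAC subrr add0r in h2.
have := vgeE c1 h1; move: h2 => [/eqP|]; first by rewrite oppr_eq0 oner_eq0.
by rewrite vN v1 ge_min => /orP [] ? ?; lia.
Qed.

Lemma inO0 : inO v 0. Proof. exact: vge0. Qed.
Lemma inO1 : inO v 1. Proof. by right; rewrite v1. Qed.
Lemma inOD a b : inO v a -> inO v b -> inO v (a + b). Proof. exact: vgeD. Qed.
Lemma inON a : inO v a -> inO v (- a). Proof. exact: vgeN. Qed.
Lemma inOM a b : inO v a -> inO v b -> inO v (a * b).
Proof. by move=> ha hb; have := vgeM ha hb; rewrite addr0. Qed.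

Lemma inO_divr x c : c != 0 -> vge (v c) x -> inO v (x / c).
Proof. by move=> c0 /(vge_div c0); rewrite subrr. Qed.

Lemma inmE x : inm v x <-> vge 1 x.
Proof. by split => -[->|h]; [left|right; lia|left|right; lia]. Qed.

Lemma inm_cong x y : inm v (x - y) -> inm v x <-> inm v y.
Proof.
rewrite !inmE => h; split => hx; first by have := vgeB hx h; rewrite opprB addrC subrK.
by have := vgeD hx h; rewrite addrC subrK.
Qed.

Lemma inmD x y : inm v x -> inm v y -> inm v (x + y).
Proof. by rewrite !inmE; apply: vgeD. Qed.

Lemma inmOM a x : inO v a -> inm v x -> inm v (a * x).
Proof. by rewrite !inmE => ha hx; have := vgeM ha hx; rewrite add0r. Qed.

Lemma inm1 : ~ inm v 1.
Proof. by rewrite inmE => -[/eqP|]; [rewrite oner_eq0|rewrite v1]. Qed.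

Lemma inm_unitMl a x : a != 0 -> v a = 0 -> inm v (a * x) -> inm v x.
Proof.
move=> a0 va; rewrite !inmE; case: (eqVneq x 0) => [->|x0]; first by left.
by move=> /(vgeE (mulf_neq0 a0 x0)); rewrite vM // va add0r; right.
Qed.

Lemma inO_notinm a : inO v a -> ~ inm v a -> a != 0 /\ v a = 0.
Proof.
move=> [->|h] hm; first by case: hm; left.
have a0 : a != 0 by apply/eqP => e; apply: hm; left.
split => //; apply/eqP; rewrite eq_le h andbT.
by case: (lerP (v a) 0) => // ?; case: hm; right.
Qed.


Definition ospan (b1 b2 : 'cV[K]_2) : vset K :=
  fun z => exists a c, [/\ inO v a, inO v c & z = a *: b1 + c *: b2].

Lemma ospan_l b1 b2 : ospan b1 b2 b1.
Proof. by exists 1, 0; rewrite scale1r scale0r addr0; split; [exact: inO1|exact: inO0|]. Qed.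

Lemma ospan_r b1 b2 : ospan b1 b2 b2.
Proof. by exists 0, 1; rewrite scale1r scale0r add0r; split; [exact: inO0|exact: inO1|]. Qed.

Lemma ospan_lin b1 b2 z w a b : ospan b1 b2 z -> ospan b1 b2 w -> inO v a -> inO v b ->
  ospan b1 b2 (a *: z + b *: w).
Proof.
move=> [a1 [c1 [ha1 hc1 ->]]] [a2 [c2 [ha2 hc2 ->]]] ha hb.
exists (a * a1 + b * a2), (a * c1 + b * c2); split.
- by apply: inOD; apply: inOM.
- by apply: inOD; apply: inOM.
by rewrite !scalerDr !scalerA !scalerDl addrACA.
Qed.

Lemma ospan_sub b1 b2 B1 B2 z : ospan b1 b2 B1 -> ospan b1 b2 B2 ->
  ospan B1 B2 z -> ospan b1 b2 z.
Proof. by move=> h1 h2 [a [c [ha hc ->]]]; apply: ospan_lin. Qed.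

Lemma ospan_eq b1 b2 B1 B2 : ospan b1 b2 B1 -> ospan b1 b2 B2 ->
  ospan B1 B2 b1 -> ospan B1 B2 b2 -> ospan B1 B2 = ospan b1 b2.
Proof. by move=> h1 h2 h3 h4; apply: vset_ext => z; split; apply: ospan_sub. Qed.

Lemma ospanC b1 b2 : ospan b2 b1 = ospan b1 b2.
Proof. by apply: ospan_eq; [exact: ospan_r|exact: ospan_l|exact: ospan_r|exact: ospan_l]. Qed.

Lemma dilate_ospan c b1 b2 : dilate c (ospan b1 b2) = ospan (c *: b1) (c *: b2).
Proof.
apply: vset_ext => z; split.
  move=> [y [[a [d [ha hd ->]]] ->]]; exists a, d; split => //.
  by rewrite scalerDr !scalerA mulrC [c * d]mulrC.
move=> [a [d [ha hd ->]]]; exists (a *: b1 + d *: b2); split; first by exists a, d.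
by rewrite scalerDr !scalerA mulrC [c * d]mulrC.
Qed.

Lemma act_ospan g b1 b2 : act g (ospan b1 b2) = ospan (g *m b1) (g *m b2).
Proof.
apply: vset_ext => z; split.
  move=> [y [[a [d [ha hd ->]]] ->]]; exists a, d; split => //.
  by rewrite mulmxDr !scalemxAr.
move=> [a [d [ha hd ->]]]; exists (a *: b1 + d *: b2); split; first by exists a, d.
by rewrite mulmxDr !scalemxAr.
Qed.

Lemma lattice_ospan p1 q1 p2 q2 : p1 * q2 - p2 * q1 != 0 ->
  lattice v (ospan (vec p1 q1) (vec p2 q2)).
Proof.
move=> d0; exists (vec p1 q1), (vec p2 q2); split => //.
- move=> a c _ _; rewrite lin_vec vec0 => /vec_inj [e1 e2].
  have ea : a * (p1 * q2 - p2 * q1) = 0.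
    have -> : a * (p1 * q2 - p2 * q1) = q2 * (a * p1 + c * p2) - p2 * (a * q1 + c * q2) by ring.
    by rewrite e1 e2; ring.
  have ec : c * (p1 * q2 - p2 * q1) = 0.
    have -> : c * (p1 * q2 - p2 * q1) = p1 * (a * q1 + c * q2) - q1 * (a * p1 + c * p2) by ring.
    by rewrite e1 e2; ring.
  by move: ea ec => /eqP + /eqP; rewrite !mulf_eq0 (negbTE d0) !orbF => /eqP -> /eqP ->.
- move=> y; rewrite [y]vec_eta; set p := y 0 0; set q := y 1 0.
  exists ((p * q2 - p2 * q) / (p1 * q2 - p2 * q1)), ((p1 * q - q1 * p) / (p1 * q2 - p2 * q1)).
  by rewrite lin_vec; congr vec; field.
Qed.

(* [lat x c] is the vertex of [T_v] attached to the ball {y | v (y - x) >= v c} of [K];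
   [v c] is its level, the Busemann function of the end fixed by upper triangular matrices. *)
Definition lat (x c : K) : vset K := ospan (vec c 0) (vec x 1).

Lemma lattice_lat x c : c != 0 -> lattice v (lat x c).
Proof. by move=> c0; apply: lattice_ospan; rewrite mulr1 mulr0 subr0. Qed.

Lemma lat_sub x c x' c' z : c != 0 -> v c <= v c' -> vge (v c) (x - x') ->
  lat x' c' z -> lat x c z.
Proof.
move=> c0 hc hx; apply: ospan_sub.
  exists (c' / c), 0; split; [|exact: inO0|by rewrite lin_vec; congr vec; field].
  exact: inO_divr (vge_le hc (vge_val _)).
exists ((x' - x) / c), 1; split; [|exact: inO1|by rewrite lin_vec; congr vec; field].
by apply: (inO_divr c0); rewrite -opprB; apply: vgeN.
Qed.

Lemma lat_eq x c x' c' : c != 0 -> c' != 0 -> v c = v c' -> vge (v c) (x - x') ->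
  lat x c = lat x' c'.
Proof.
move=> c0 c1 hc hx; apply: vset_ext => z; split; apply: lat_sub; rewrite -?hc //.
by rewrite -opprB; apply: vgeN.
Qed.

Lemma dilate_lat x c l : dilate l (lat x c) = ospan (vec (l * c) 0) (vec (l * x) l).
Proof. by rewrite dilate_ospan !vecZ mulr0 mulr1. Qed.

Lemma act_rho_lat (G : groupType) (chi theta : G -> K) g x c :
  act (rho chi theta g) (lat x c) = lat (chi g * x + theta g) (chi g * c).
Proof. by rewrite act_ospan !rho_vec mulr0 addr0 mulr1. Qed.

Lemma lat_vecP x c a b : c != 0 -> lat x c (vec a b) <-> inO v b /\ vge (v c) (a - b * x).
Proof.
move=> c0; split.
  move=> [e [f [he hf]]]; rewrite lin_vec => /vec_inj [-> ->].
  rewrite !mulr0 !mulr1 add0r (_ : _ - _ = e * c); last by ring.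
  by split => //; rewrite -[v c]add0r; apply: vgeM (vge_val c).
move=> [hb hab]; exists ((a - b * x) / c), b; split => //; first exact: inO_divr.
by rewrite lin_vec; congr vec; field.
Qed.

Lemma homot_lat x c x' c' : c != 0 -> c' != 0 -> homot (lat x c) (lat x' c') ->
  v c = v c' /\ vge (v c) (x - x').
Proof.
move=> c0 c1 /homotE [l [l0 hl]].
have fwd a b : lat x c (vec a b) -> lat x' c' (vec (l * a) (l * b)).
  by rewrite hl -vecZ; exists (vec a b).
have bwd a b : lat x' c' (vec a b) -> lat x c (vec (l^-1 * a) (l^-1 * b)).
  by rewrite hl -vecZ => -[y [hy ->]]; rewrite scalerA mulVf // scale1r.
have /(lat_vecP _ _ _ c1) [hl1 hx] := fwd _ _ (ospan_r (vec c 0) (vec x 1)).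
have /(lat_vecP _ _ _ c1) [_ hc] := fwd _ _ (ospan_l (vec c 0) (vec x 1)).
have /(lat_vecP _ _ _ c0) [hlV _] := bwd _ _ (ospan_r (vec c' 0) (vec x' 1)).
have /(lat_vecP _ _ _ c0) [_ hc'] := bwd _ _ (ospan_l (vec c' 0) (vec x' 1)).
move: hl1 hx hlV hc hc'; rewrite !(mulr1, mulr0, mul0r, subr0) => hl1 hx hlV hc hc'.
(* [l] and [l^-1] are both integral, so [l] is a unit *)
have vl : v l = 0.
  by have := vgeE l0 hl1; have := vgeE (invr_neq0 l0) hlV; rewrite vV //; lia.
have le1 := vgeE (mulf_neq0 l0 c0) hc; rewrite vM // vl add0r in le1.
have le2 := vgeE (mulf_neq0 (invr_neq0 l0) c1) hc'; rewrite vM ?invr_neq0 // vV // vl in le2.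
have ecc' : v c = v c' by apply/eqP; rewrite eq_le le1; lia.
split => //; apply: (vge_mull_cancel l0).
by rewrite vl addr0 mulrBr ecc'.
Qed.

Lemma lattice_homot_lat_aux p1 q1 p2 q2 : q2 != 0 -> inO v (q1 / q2) ->
  (forall a c, inO v a -> inO v c -> a *: vec p1 q1 + c *: vec p2 q2 = 0 -> a = 0 /\ c = 0) ->
  exists x c, c != 0 /\ homot (lat x c) (ospan (vec p1 q1) (vec p2 q2)).
Proof.
move=> q20 hw hind; set w := q1 / q2; set al := p1 - w * p2.
have al0 : al != 0.
  apply/eqP => e; have [] := hind (-1) w (inON inO1) hw.
    rewrite lin_vec vec0; congr vec; last by rewrite /w; field.
    by move: e; rewrite /al => /eqP; rewrite subr_eq0 => /eqP ->; ring.
  by move/eqP; rewrite oppr_eq0 oner_eq0.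
have -> : ospan (vec p1 q1) (vec p2 q2) = ospan (vec al 0) (vec p2 q2).
  symmetry; apply: ospan_eq; [|exact: ospan_r| |exact: ospan_r].
  - exists 1, (- w); split; [exact: inO1|exact: inON|].
    by rewrite lin_vec; congr vec; rewrite /al /w; field.
  - exists 1, w; split; [exact: inO1|exact: hw|].
    by rewrite lin_vec; congr vec; rewrite /al /w; field.
exists (p2 / q2), (al / q2); split; first by rewrite mulf_neq0 ?invr_neq0.
apply/homotE; exists q2; split => //; rewrite dilate_lat.
by congr ospan; congr vec; field.
Qed.

(* Hermite normal form *)
Lemma lattice_homot_lat L : lattice v L -> exists x c, c != 0 /\ homot (lat x c) L.
Proof.
move=> [b1 [b2 [hL hind hsp]]].
have -> : L = ospan b1 b2 by apply: vset_ext => z; rewrite hL.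
move: hind hsp; rewrite [b1]vec_eta [b2]vec_eta.
set p1 := b1 0 0; set q1 := b1 1 0; set p2 := b2 0 0; set q2 := b2 1 0 => hind hsp.
have hindC : forall a c, inO v a -> inO v c ->
    a *: vec p2 q2 + c *: vec p1 q1 = 0 -> a = 0 /\ c = 0.
  by move=> a c ha hc; rewrite addrC => /(hind _ _ hc ha) [-> ->].
have nz : (q1 != 0) || (q2 != 0).
  have [k1 [k2]] := hsp (vec 0 1); rewrite lin_vec => /vec_inj [_ e].
  case: (eqVneq q1 0) => [h1|//]; case: (eqVneq q2 0) => [h2|]; last by rewrite orbT.
  by move: e; rewrite h1 h2 !mulr0 addr0 => /eqP; rewrite oner_eq0.
have inO_ratio s t : s != 0 -> t != 0 -> v t <= v s -> inO v (s / t).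
  by move=> s0 t0 le; apply: (inO_divr t0); apply: vge_le le (vge_val s).
case: (eqVneq q2 0) => [e2|q20].
  rewrite -ospanC; apply: lattice_homot_lat_aux => //; last by rewrite e2 mul0r; exact: inO0.
  by move: nz; rewrite e2 eqxx orbF.
case: (eqVneq q1 0) => [e1|q10].
  by apply: lattice_homot_lat_aux => //; rewrite e1 mul0r; exact: inO0.
case: (lerP (v q2) (v q1)) => h; first by apply: lattice_homot_lat_aux => //; apply: inO_ratio.
by rewrite -ospanC; apply: lattice_homot_lat_aux => //; apply: inO_ratio => //; exact: ltW.
Qed.

Lemma lattice_dilate l L : l != 0 -> lattice v L -> lattice v (dilate l L).
Proof.
move=> l0 /lattice_homot_lat [x [c [c0 /homotE [m [m0 ->]]]]].
rewrite dilateM dilate_lat; apply: lattice_ospan.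
by rewrite mulr0 subr0 !mulf_neq0.
Qed.

Lemma quot_residue_dilate l A B : l != 0 ->
  quot_residue v (dilate l A) (dilate l B) -> quot_residue v A B.
Proof.
move=> l0 [hs [phi [hO hlin hsurj hker]]]; split.
  by move=> z /(mem_dilate l0) /hs /(mem_dilate l0).
exists (fun z => phi (l *: z)); split.
- by move=> z /(mem_dilate l0) /hO.
- move=> x y a b hx hy ha hb.
  have := hlin _ _ _ _ ((mem_dilate l0).2 hx) ((mem_dilate l0).2 hy) ha hb.
  by rewrite scalerDr !scalerA mulrC [l * b]mulrC -!scalerA.
- by move=> c hc; have [_ [[y [hy ->]] hc']] := hsurj c hc; exists y.
- by move=> z hz; have := hker _ ((mem_dilate l0).2 hz); rewrite mem_dilate.
Qed.

Lemma quot_residue_ospan b1 b2 M : quot_residue v (ospan b1 b2) M ->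
  exists al be, [/\ inO v al, inO v be, ~ (inm v al /\ inm v be),
    forall z, M z -> ospan b1 b2 z
  & forall a d, inO v a -> inO v d -> M (a *: b1 + d *: b2) <-> inm v (a * al + d * be)].
Proof.
move=> [hs [phi [hO hlin hsurj hker]]].
have [hb1 hb2] := (ospan_l b1 b2, ospan_r b1 b2).
exists (phi b1), (phi b2); split; [exact: hO|exact: hO| |exact: hs|].
  move=> [ma mb]; have [z [[a [d [ha hd ez]]] hz1]] := hsurj 1 inO1.
  have h1 := hlin _ _ _ _ hb1 hb2 ha hd; rewrite -ez in h1.
  apply: inm1; apply/(inm_cong hz1)/(inm_cong h1).
  by apply: inmD; apply: inmOM.
move=> a d ha hd; have hz : ospan b1 b2 (a *: b1 + d *: b2) by exists a, d.
by rewrite (hker _ hz); apply: inm_cong; exact: hlin.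
Qed.

Section Uniformizer.
Variable p : K.
Hypotheses (p0 : p != 0) (vp : v p = 1).

Lemma inm_p : inm v p.
Proof. by right; rewrite vp. Qed.

Lemma inO_p : inO v p.
Proof. by right; rewrite vp. Qed.

Lemma inm_divp d : inm v d -> inO v (d / p).
Proof. by rewrite inmE -vp; apply: inO_divr. Qed.

Lemma vdivp c : c != 0 -> v (c / p) = v c - 1.
Proof. by move=> c0; rewrite vM ?invr_neq0 // vV // vp. Qed.

Lemma vmulp c : c != 0 -> v (c * p) = v c + 1.
Proof. by move=> c0; rewrite vM // vp. Qed.

Lemma vXp i : v (p ^+ i) = i%:Z.
Proof. by rewrite vX // vp mul1r. Qed.

Lemma quot_residue_lat x c M : c != 0 -> quot_residue v (lat x c) M ->
  M = dilate p (lat x (c / p)) \/ exists a, inO v a /\ M = lat (x + c * a) (c * p).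
Proof.
move=> c0 /quot_residue_ospan [al [be [hal hbe notboth Msub memM]]].
have [mal|nal] := classic (inm v al).
  have [be0 vbe] : be != 0 /\ v be = 0.
    by apply: inO_notinm => // mbe; apply: notboth.
  left; rewrite dilate_lat; apply: vset_ext => z; split.
    move=> hz; have [a [d [ha hd ez]]] := Msub z hz.
    move: hz; rewrite ez memM // => hm.
    have md : inm v d.
      apply: (inm_unitMl be0 vbe); rewrite mulrC.
      rewrite (_ : d * be = (a * al + d * be) - a * al); last by ring.
      by move: hm (inmOM ha mal); rewrite !inmE; apply: vgeB.
    exists a, (d / p); split => //; first exact: inm_divp.
    by rewrite !lin_vec; congr vec; field.
  move=> [e [f [he hf ->]]].
  rewrite (_ : _ + _ = e *: vec c 0 + (f * p) *: vec x 1); last first.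
    by rewrite !lin_vec; congr vec; field.
  apply/memM => //; first exact: inOM inO_p.
  apply: inmD; first exact: inmOM.
  by rewrite mulrAC; apply: inmOM; [apply: inOM|exact: inm_p].
have [al0 val] := inO_notinm hal nal.
have hw : inO v (- be / al) by apply: inOM; [exact: inON|right; rewrite vV // val].
right; exists (- be / al); split => //; apply: vset_ext => z; split.
  move=> hz; have [a [d [ha hd ez]]] := Msub z hz.
  move: hz; rewrite ez memM // => hm.
  exists ((a * al + d * be) / (al * p)), d; split => //.
    by apply: inO_divr; [rewrite mulf_neq0|rewrite vM // val vp; apply/inmE].
  by rewrite !lin_vec; congr vec; field; rewrite al0 p0.
move=> [e [f [he hf ->]]].
rewrite (_ : _ + _ = (e * p + f * (- be / al)) *: vec c 0 + f *: vec x 1); last first.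
  by rewrite !lin_vec; congr vec; field.
apply/memM => //; first by apply: inOD; apply: inOM => //; exact: inO_p.
rewrite (_ : _ + _ = (e * al) * p); last by field.
by apply: inmOM; [apply: inOM|exact: inm_p].
Qed.

Lemma adj_lat X Z x c : c != 0 -> adj v X Z -> homot (lat x c) X ->
  homot (lat x (c / p)) Z \/ exists a, inO v a /\ homot (lat (x + c * a) (c * p)) Z.
Proof.
move=> c0 [M1 [M2 [lM1 lM2 hXM1 hZM2 hq]]] hNX.
have hNM1 := homot_trans hNX hXM1; have hM2Z := homot_sym hZM2.
case: hq => hq.
  move/homotE: hNM1 => [l [l0 eM1]].
  rewrite eM1 -(dilateVK M2 l0) in hq.
  have hM2 : homot (dilate l^-1 M2) Z.
    by apply: homot_trans (homot_sym (homot_dilate _ (invr_neq0 l0))) hM2Z.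
  have [e|[a [ha e]]] := quot_residue_lat c0 (quot_residue_dilate l0 hq).
    by left; apply: homot_trans (homot_dilate _ p0) _; rewrite -e.
  by right; exists a; rewrite -e.
have [y [d [d0 hNM2]]] := lattice_homot_lat lM2.
move/homotE: (hNM2) => [l [l0 eM2]].
rewrite eM2 -(dilateVK M1 l0) in hq.
have hM1 : homot (lat x c) (dilate l^-1 M1).
  exact: homot_trans hNM1 (homot_dilate _ (invr_neq0 l0)).
have hNZ : homot (lat y d) Z := homot_trans hNM2 hM2Z.
have [e|[a [ha e]]] := quot_residue_lat d0 (quot_residue_dilate l0 hq); rewrite e in hM1.
  (* [X] is the parent of [Z], so [Z] is a child of [X] *)
  have [hv1 hg] := homot_lat c0 (mulf_neq0 d0 (invr_neq0 p0))
    (homot_trans hM1 (homot_sym (homot_dilate _ p0))).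
  right; exists ((y - x) / c); split.
    by apply: (inO_divr c0); rewrite -opprB; apply: vgeN.
  rewrite (_ : x + _ = y); last by field.
  rewrite (@lat_eq y (c * p) y d) ?mulf_neq0 ?subrr //; last exact: vge0.
  by rewrite vmulp // hv1 vdivp //; lia.
have [hv1 hg] := homot_lat c0 (mulf_neq0 d0 p0) hM1.
left; rewrite (@lat_eq x (c / p) y d) ?mulf_neq0 ?invr_neq0 //.
  by rewrite vdivp // hv1 vmulp //; lia.
rewrite (_ : x - y = (x - (y + d * a)) + d * a); last by ring.
apply: vgeD; first by apply: vge_le hg; rewrite vdivp //; lia.
by rewrite vdivp // hv1 vmulp //; apply: vge_le (vgeM (vge_val d) ha); lia.
Qed.

(* Along an edge the valuation [v c] of the representative changes by one. *)
Lemma tpath_val_bound n X Y x c y d : c != 0 -> d != 0 -> tpath v n X Y ->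
  homot (lat x c) X -> homot (lat y d) Y -> v d <= v c + n%:Z /\ v c <= v d + n%:Z.
Proof.
elim: n X x c => [|n IH] X x c c0 d0 /=.
  move=> hXY hX hY.
  have [e _] := homot_lat c0 d0 (homot_trans (homot_trans hX hXY) (homot_sym hY)).
  by rewrite e; lia.
move=> [z [lz [hadj hp]]] hX hY.
have [h|[a [ha h]]] := adj_lat c0 hadj hX.
  by have := IH z x _ (mulf_neq0 c0 (invr_neq0 p0)) d0 hp h hY; rewrite vdivp //; lia.
by have := IH z _ _ (mulf_neq0 c0 p0) d0 hp h hY; rewrite vmulp //; lia.
Qed.

Lemma quot_residue_parent x c : c != 0 -> quot_residue v (lat x c) (dilate p (lat x (c / p))).
Proof.
move=> c0; rewrite dilate_lat; split.
  move=> z [e [f [he hf ->]]]; exists e, (f * p); split => //; first exact: inOM inO_p.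
  by rewrite !lin_vec; congr vec; field.
exists (fun z => z 1 0); split.
- by move=> z [a [d [ha hd ->]]]; rewrite lin_vec vec_snd mulr0 add0r mulr1.
- by move=> z w a b _ _ _ _; rewrite /congm !mxE subrr; left.
- move=> d hd; exists (d *: vec x 1); split; last by rewrite /congm vecZ vec_snd mulr1 subrr; left.
  by exists 0, d; rewrite scale0r add0r; split; [exact: inO0|exact: hd|].
- move=> z [a [d [ha hd ->]]]; rewrite lin_vec vec_snd mulr0 add0r mulr1; split.
    move=> [e [f [he hf]]]; rewrite lin_vec => /vec_inj [_ ->].
    by rewrite mulr0 add0r; apply: inmOM => //; apply: inm_p.
  move=> hm; exists a, (d / p); split => //; first exact: inm_divp.
  by rewrite lin_vec; congr vec; field.
Qed.

Lemma adj_parent x c : c != 0 -> adj v (lat x c) (lat x (c / p)).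
Proof.
move=> c0; have c'0 : c / p != 0 by rewrite mulf_neq0 ?invr_neq0.
exists (lat x c), (dilate p (lat x (c / p))); split.
- exact: lattice_lat.
- exact/lattice_dilate/lattice_lat.
- exact: homot_refl.
- exact: homot_dilate.
- by left; apply: quot_residue_parent.
Qed.

Lemma adj_sym X Y : adj v X Y -> adj v Y X.
Proof. by move=> [M1 [M2 [? ? ? ? hq]]]; exists M2, M1; split => //; case: hq; [right|left]. Qed.

Definition std_ray (t : nat) : vset K := lat 0 (p ^- t).

Lemma pN_neq0 t : p ^- t != 0.
Proof. by rewrite invr_neq0 // expf_neq0. Qed.

Lemma vpN t : v (p ^- t) = - t%:Z.
Proof. by rewrite vV ?expf_neq0 // vXp. Qed.

Lemma std_rayS t : std_ray t.+1 = lat 0 (p ^- t / p).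
Proof. by rewrite /std_ray exprSr invfM. Qed.

Lemma lattice_std_ray t : lattice v (std_ray t).
Proof. exact: lattice_lat (pN_neq0 t). Qed.

Lemma tpath_std_ray n s : tpath v n (std_ray s) (std_ray (s + n)).
Proof.
elim: n s => [|n IH] s /=; first by rewrite addn0; exact: homot_refl.
exists (std_ray s.+1); split; first exact: lattice_std_ray.
split; first by rewrite std_rayS; apply: adj_parent; exact: pN_neq0.
by rewrite addnS -addSn; apply: IH.
Qed.

Lemma tpath_std_ray_rev n s : tpath v n (std_ray (s + n)) (std_ray s).
Proof.
elim: n s => [|n IH] s /=; first by rewrite addn0; exact: homot_refl.
exists (std_ray (s + n)); split; first exact: lattice_std_ray.
split; last exact: IH.
by rewrite addnS std_rayS; apply/adj_sym/adj_parent; exact: pN_neq0.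
Qed.

Lemma dist_std_ray s t : dist v (std_ray s) (std_ray t) (maxn s t - minn s t).
Proof.
split.
  case: (leqP s t) => h; first by have := tpath_std_ray (t - s) s; rewrite subnKC.
  by have := tpath_std_ray_rev (s - t) t; rewrite subnKC // ltnW.
move=> m hm hp.
have := tpath_val_bound (pN_neq0 s) (pN_neq0 t) hp (homot_refl _) (homot_refl _).
rewrite !vpN; lia.
Qed.

Lemma std_ray_is_ray : is_ray v std_ray.
Proof. by split; [exact: lattice_std_ray|exact: dist_std_ray]. Qed.

Lemma busemann_std_ray s : busemann v std_ray (std_ray s) (- s%:Z).
Proof.
exists s => t hst; exists (t - s)%N; split; last by lia.
by have := dist_std_ray s t; rewrite (maxn_idPr hst) (minn_idPl hst).
Qed.

Definition level (X : vset K) (t : int) :=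
  exists x c, [/\ c != 0, homot (lat x c) X & v c = t].

Lemma level_uniq X t t' : level X t -> level X t' -> t = t'.
Proof.
move=> [x [c [c0 h1 <-]]] [x' [c' [c1 h2 <-]]].
by have [] := homot_lat c0 c1 (homot_trans h1 (homot_sym h2)).
Qed.

Lemma level_lat x c X : c != 0 -> homot (lat x c) X -> level X (v c).
Proof. by move=> c0 h; exists x, c. Qed.

Section Ray.
Variable R : nat -> vset K.
Hypothesis hR : is_ray v R.

Lemma ray_lattice j : lattice v (R j).
Proof. by case: hR. Qed.

Lemma ray_dist s t : dist v (R s) (R t) (maxn s t - minn s t).
Proof. by case: hR. Qed.

Lemma ray_step j x c : c != 0 -> homot (lat x c) (R j) ->
  homot (lat x (c / p)) (R j.+1) \/
  exists a, inO v a /\ homot (lat (x + c * a) (c * p)) (R j.+1).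
Proof.
move=> c0 h; have [hp _] := ray_dist j j.+1.
rewrite (_ : maxn j j.+1 - minn j j.+1 = 1)%N in hp; last by lia.
move: hp => [z [lz [hadj hz]]].
have [h1|[a [ha h1]]] := adj_lat c0 hadj h; first by left; apply: homot_trans h1 hz.
by right; exists a; split => //; apply: homot_trans h1 hz.
Qed.

Definition ascends j := exists t, level (R j) t /\ level (R j.+1) (t - 1).
Definition descends j := exists t, level (R j) t /\ level (R j.+1) (t + 1).

Lemma ascends_or_descends j : ascends j \/ descends j.
Proof.
have [x [c [c0 h]]] := lattice_homot_lat (ray_lattice j).
have [h1|[a [ha h1]]] := ray_step c0 h.
  left; exists (v c); split; first exact: level_lat h.
  by rewrite -vdivp //; apply: level_lat h1; rewrite mulf_neq0 ?invr_neq0.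
right; exists (v c); split; first exact: level_lat h.
by rewrite -vmulp //; apply: level_lat h1; rewrite mulf_neq0.
Qed.

(* A descent followed by an ascent would return to [R j], contradicting [d(R j, R j.+2) = 2]. *)
Lemma descends_succ j : descends j -> descends j.+1.
Proof.
case: (ascends_or_descends j.+1) => // -[t' [ht3 ht4]] [t [ht1 ht2]].
have [x [c [c0 h]]] := lattice_homot_lat (ray_lattice j).
have e1 := level_uniq ht1 (level_lat c0 h).
have [h1|[a [ha h1]]] := ray_step c0 h.
  by have := level_uniq ht2 (level_lat (mulf_neq0 c0 (invr_neq0 p0)) h1); rewrite vdivp //; lia.
have cp0 : c * p != 0 by rewrite mulf_neq0.
have e2 := level_uniq ht3 (level_lat cp0 h1).
have e3 := level_uniq ht2 (level_lat cp0 h1).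
have [h2|[a' [ha' h2]]] := ray_step cp0 h1.
  have h3 : homot (lat x c) (R j.+2).
    rewrite (@lat_eq x c (x + c * a) (c * p / p)) //.
    - by rewrite mulf_neq0 ?invr_neq0.
    - by rewrite mulfK.
    - rewrite opprD addrA subrr add0r; apply: vgeN.
      by rewrite -[v c]addr0; apply: vgeM (vge_val c) ha.
  have [_ hmin] := ray_dist j j.+2.
  by exfalso; apply: (hmin 0%N); [lia|apply: homot_trans (homot_sym h) h3].
by have := level_uniq ht4 (level_lat (mulf_neq0 cp0 p0) h2); rewrite !vmulp //; lia.
Qed.

Lemma descends_from J : descends J -> forall i, descends (J + i).
Proof.
move=> hd; elim => [|i IH]; first by rewrite addn0.
by rewrite addnS; apply: descends_succ.
Qed.

Lemma descending_lat j0 : (forall i, descends (j0 + i)) ->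
  forall y d, d != 0 -> homot (lat y d) (R j0) ->
  forall i, exists y', homot (lat y' (d * p ^+ i)) (R (j0 + i)) /\ vge (v d) (y' - y).
Proof.
move=> hd y d d0 h; elim => [|i [y' [h1 g1]]].
  by exists y; rewrite expr0 mulr1 addn0 subrr; split => //; exact: vge0.
have dpi : d * p ^+ i != 0 by rewrite mulf_neq0 // expf_neq0.
have [h2|[a [ha h2]]] := ray_step dpi h1.
  have [t [ht1 ht2]] := hd i.
  have := level_uniq ht1 (level_lat dpi h1).
  have := level_uniq ht2 (level_lat (mulf_neq0 dpi (invr_neq0 p0)) h2).
  by rewrite vdivp //; lia.
exists (y' + d * p ^+ i * a); split; first by rewrite exprSr mulrA addnS.
rewrite (_ : _ - y = (y' - y) + d * p ^+ i * a); last by ring.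
apply: vgeD => //; apply: vge_le (vgeM (vge_val _) ha).
by rewrite vM ?expf_neq0 // vXp; lia.
Qed.

Lemma ascending_ray_equiv : (forall j, ascends j) -> ray_equiv R std_ray.
Proof.
move=> hup; have [x [c [c0 h0]]] := lattice_homot_lat (ray_lattice 0).
have cpN n : c * p ^- n != 0 by rewrite mulf_neq0 // pN_neq0.
have hn n : homot (lat x (c * p ^- n)) (R n).
  elim: n => [|n IH]; first by rewrite expr0 invr1 mulr1.
  have [h1|[a [ha h1]]] := ray_step (cpN n) IH; first by rewrite exprSr invfM mulrA.
  have [t [ht1 ht2]] := hup n.
  have := level_uniq ht1 (level_lat (cpN n) IH).
  have := level_uniq ht2 (level_lat (mulf_neq0 (cpN n) p0) h1).
  by rewrite vmulp //; lia.
(* once [v (p ^- n)] is below [v x], the vertex [R n] lies on the standard ray *)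
set k := (absz (v c) + absz (v x))%N.
exists k, (absz (k%:Z - v c)) => n.
apply: homot_trans (homot_sym (hn (n + k)%N)) _.
rewrite /std_ray (@lat_eq x _ 0 (p ^- (n + absz (k%:Z - v c)))) ?pN_neq0 //.
  exact: homot_refl.
  by rewrite vM ?pN_neq0 // !vpN /k; lia.
rewrite subr0; case: (eqVneq x 0) => [->|_]; first exact: vge0.
by right; rewrite vM ?pN_neq0 // vpN /k; lia.
Qed.

End Ray.

Section Cocycle.
Variables (G : groupType) (chi theta : G -> K).
Hypothesis hchi : is_character chi.

Lemma chi_neq0 g : chi g != 0.
Proof. by case: hchi. Qed.

Lemma chiV g : chi g^-1%g = (chi g)^-1.
Proof.
case: hchi => _ chiM; have := chiM g g^-1%g; rewrite mulgV.
have := chiM 1%g 1%g; rewrite mulg1 => e1.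
have -> : chi 1%g = 1 by apply: (mulfI (chi_neq0 1%g)); rewrite -e1 mulr1.
by move=> e; apply: (mulfI (chi_neq0 g)); rewrite -e mulfV // chi_neq0.
Qed.

Lemma exists_chi_val_gt0 : (exists g, v (chi g) != 0) -> exists g, 0 < v (chi g).
Proof.
move=> [g hg]; case: (ltrgt0P (v (chi g))) => h; first by exists g.
  by exists g^-1%g; rewrite chiV vV ?chi_neq0 // oppr_gt0.
by move: hg; rewrite h eqxx.
Qed.

Lemma homot_act_rho g x c X : homot (lat x c) X ->
  homot (lat (chi g * x + theta g) (chi g * c)) (act (rho chi theta g) X).
Proof. by move=> h; rewrite -act_rho_lat; apply: homot_act. Qed.

Lemma act_rho_std_ray g (t t' : nat) : t'%:Z = t%:Z - v (chi g) ->
  vge (v (chi g) - t%:Z) (theta g) -> act (rho chi theta g) (std_ray t) = std_ray t'.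
Proof.
move=> et hth; rewrite /std_ray act_rho_lat mulr0 add0r.
apply: lat_eq; rewrite ?mulf_neq0 ?chi_neq0 ?pN_neq0 //.
  by rewrite vM ?chi_neq0 ?pN_neq0 // !vpN; lia.
by rewrite subr0 vM ?chi_neq0 ?pN_neq0 // vpN.
Qed.

Lemma act_rho_std_ray_shift g : exists k m : nat,
  m%:Z = k%:Z - v (chi g) /\
  forall n, act (rho chi theta g) (std_ray (n + k)) = std_ray (n + m).
Proof.
set k := (absz (v (chi g)) + absz (v (theta g)))%N.
exists k, (absz (k%:Z - v (chi g))); split; first by rewrite /k; lia.
move=> n; apply: act_rho_std_ray; first by rewrite /k; lia.
case: (eqVneq (theta g) 0) => [->|_]; first exact: vge0.
by right; rewrite /k; lia.
Qed.

Lemma std_ray_fixed g : ray_equiv (act_ray (rho chi theta g) std_ray) std_ray.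
Proof.
have [k [m [_ e]]] := act_rho_std_ray_shift g.
by exists k, m => n; rewrite /act_ray e; apply: homot_refl.
Qed.

Lemma busemann_std_ray_nonzero : (exists g, v (chi g) != 0) ->
  exists g x c1 c2, [/\ lattice v x, busemann v std_ray (act (rho chi theta g) x) c1,
                        busemann v std_ray x c2 & c1 <> c2].
Proof.
move=> [g hg]; have [k [m [ekm e]]] := act_rho_std_ray_shift g.
exists g, (std_ray k), (- m%:Z), (- k%:Z); split.
- exact: lattice_std_ray.
- by rewrite -[k]add0n e add0n; apply: busemann_std_ray.
- exact: busemann_std_ray.
by move=> h; move: hg; rewrite (_ : v (chi g) = 0) //; lia.
Qed.

(* [R] eventually descends to the boundary point [x0] of [K]. *)
Definition ray_centered (R : nat -> vset K) (x0 : K) :=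
  exists J c, c != 0 /\ forall n, homot (lat x0 (c * p ^+ n)) (R (J + n)%N).

Lemma ray_centered_fixed R x0 g : ray_centered R x0 ->
  ray_equiv (act_ray (rho chi theta g) R) R -> chi g * x0 + theta g = x0.
Proof.
move=> [J [c [c0 hc]]] [k [m hkm]].
have cpn n : c * p ^+ n != 0 by rewrite mulf_neq0 // expf_neq0.
apply/eqP; rewrite -subr_eq0; apply/eqP/vge_all_eq0 => t.
set n := absz (t - v (chi g) - v c)%R.
have hA := homot_act_rho g (hc (n + k)%N).
have hh := hkm (J + n)%N; rewrite /act_ray -!addnA in hh.
have [_] := homot_lat (mulf_neq0 (chi_neq0 g) (cpn _)) (cpn _)
  (homot_trans (homot_trans hA hh) (homot_sym (hc (n + m)%N))).
by apply: vge_le; rewrite !vM ?chi_neq0 ?expf_neq0 // vXp /n; lia.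
Qed.

(* A descending ray fixed by [g0] with [v (chi g0) > 0] converges to the fixed point of the
   contraction [x |-> chi g0 * x + theta g0]. *)
Lemma descending_fixed_ray_centered R J g0 : is_ray v R -> descends R J ->
  ray_equiv (act_ray (rho chi theta g0) R) R -> 0 < v (chi g0) ->
  ray_centered R (theta g0 / (1 - chi g0)).
Proof.
move=> hR hJ [k [m hkm]] hg0.
set x0 := theta g0 / (1 - chi g0).
have ch0 := chi_neq0 g0.
have [vs1 s10] := v_subr1 hg0.
have hd := descends_from hR hJ.
have [x1 [c1 [c10 h1]]] := lattice_homot_lat (ray_lattice hR J).
have D := descending_lat hR hd c10 h1.
have cpi i : c1 * p ^+ i != 0 by rewrite mulf_neq0 // expf_neq0.
have emk : m%:Z = k%:Z + v (chi g0).
  have [y [hy _]] := D k; have [y2 [hy2 _]] := D m.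
  have [e _] := homot_lat (mulf_neq0 ch0 (cpi k)) (cpi m)
    (homot_trans (homot_trans (homot_act_rho g0 hy) (hkm J)) (homot_sym hy2)).
  by move: e; rewrite !vM ?expf_neq0 // !vXp; lia.
exists (J + k)%N, (c1 * p ^+ k); split; first exact: cpi.
move=> n; rewrite -mulrA -exprD -addnA addnC.
have [y [hy _]] := D (n + k)%N.
move: (c1 * p ^+ (n + k)) (cpi (n + k)%N) hy => d d0 hy.
have hdn i : descends R ((J + (n + k)) + i) by rewrite -addnA; apply: hd.
have [y' [hy' gy']] := descending_lat hR hdn d0 hy (m - k)%N.
have hh := hkm (J + n)%N; rewrite /act_ray -!addnA in hh.
rewrite (_ : J + (n + k) + (m - k) = J + (n + m))%N in hy'; last by lia.
have [_ g1] := homot_lat (mulf_neq0 ch0 d0) (mulf_neq0 d0 (expf_neq0 _ p0))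
  (homot_trans (homot_trans (homot_act_rho g0 hy) hh) (homot_sym hy')).
have g2 : vge (v d) ((chi g0 - 1) * (y - x0)).
  have -> : (chi g0 - 1) * (y - x0) = (chi g0 * y + theta g0 - y') + (y' - y).
    by rewrite /x0; field; rewrite subr_eq0 eq_sym -subr_eq0.
  by apply: vgeD => //; apply: vge_le g1; rewrite vM //; lia.
rewrite (@lat_eq x0 d y d) // -opprB; apply/vgeN/(vge_mull_cancel s10).
by rewrite vs1 addr0.
Qed.

Lemma fixed_ray_equiv R : is_ray v R ->
  (forall g, ray_equiv (act_ray (rho chi theta g) R) R) ->
  ~ coboundary chi theta -> (exists g, 0 < v (chi g)) -> ray_equiv R std_ray.
Proof.
move=> hR hfix hncb [g0 hg0].
case: (classic (exists j, descends R j)) => [[J hJ]|hnd].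
  case: hncb; exists (- (theta g0 / (1 - chi g0))) => g.
  have e := ray_centered_fixed (descending_fixed_ray_centered hR hJ (hfix g0) hg0) (hfix g).
  by rewrite -[theta g](addKr (chi g * (theta g0 / (1 - chi g0)))) e; ring.
apply: ascending_ray_equiv => // j.
by case: (ascends_or_descends hR j) => // hd; case: hnd; exists j.
Qed.

End Cocycle.
End Uniformizer.
End Valuation.

Theorem proposition6 (K : fieldType) (v : K -> int) (G : groupType)
    (chi theta : G -> K) :
  discrete_valuation v ->
  finitely_generated G ->
  E1 chi ->
  cocycle chi theta ->
  ~ coboundary chi theta ->
  (exists g : G, v (chi g) != 0) ->
  exceptional v (rho chi theta).
Proof.
move=> hv _ [hchi _] _ hncb hchi_v.
have [_ _ /(_ 1) [p [p0 vp]]] := hv.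
exists (std_ray v p); split.
- exact: std_ray_is_ray.
- exact: std_ray_fixed.
- move=> R hR hfix; apply: (fixed_ray_equiv hv p0 vp hchi hR hfix hncb).
  exact: exists_chi_val_gt0.
- exact: busemann_std_ray_nonzero.
Qed.
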